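(* Let $B$ be a unital commutative semi-simple Banach algebra with connected maximal ideal space $X$. Let $T$ be a unital endomorphism of $B$ which is a Riesz operator, induced by a selfmap $\phi$ of $X$, and suppose $\{x_0\}=\bigcap_{n=0}^\infty\phi_n(X)$. If $x_0$ is an isolated point of $X$ in the norm topology, then there is a positive integer $N$ such that $T^Nf=\hat f(x_0)1$ for all $f\in B$.
   Context: The maximal ideal space $X$ of $B$ carries the weak-* (Gelfand) topology, and $\hat f$ denotes the Gelfand transform of $f\in B$. A unital endomorphism $T$ of $B$ is induced by a weak-* continuous selfmap $\phi$ of $X$ if $\widehat{Tf}(x)=\hat f(\phi(x))$ for all $f\in B$, $x\in X$; $\phi_n$ is the $n$-th iterate of $\phi$ ($\phi_0$ the identity). The norm topology on $X$ is that given by the metric $\|x-y\|=\sup\{|\hat f(x)-\hat f(y)|: f\in B,\ \|f\|\le 1\}$ (the norm of $B^*$). A bounded operator $T$ is a Riesz operator if $\lim_{n}\left[\inf\{\|T^n-K\|:K \text{ compact}\}\right]^{1/n}=0$. *)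

From HB Require Import structures.
From mathcomp Require Import all_boot all_order all_algebra.
From mathcomp Require Import all_classical all_reals all_analysis.
From mathcomp Require Import complex.
Import Order.TTheory GRing.Theory Num.Theory.
Import numFieldTopology.Exports numFieldNormedType.Exports.

Set Implicit Arguments.
Unset Strict Implicit.
Unset Printing Implicit Defensive.

Local Open Scope ring_scope.
Local Open Scope classical_set_scope.

HB.instance Definition _ (R : rcfType) := PseudoPointedMetric.copy R[i] (R[i])^o.

Section BanachAlgebra.
Variables (R : realType) (B : completeNormedModType R[i]).

Definition normB (f : B) : R := complex.Re `|f|.
Definition normC (z : R[i]) : R := complex.Re `|z|.

Definition is_unital_comm_banach_algebra (mul : B -> B -> B) (one : B) : Prop :=
  [/\ associative mul, commutative mul & left_id one mul] /\
  [/\ (forall f g h, mul (f + g) h = mul f h + mul g h),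
      (forall (a : R[i]) f g, mul (a *: f) g = a *: mul f g),
      (forall f g, normB (mul f g) <= normB f * normB g)
    & normB one = 1].

Definition is_linear_map (T : B -> B) : Prop :=
  forall (a : R[i]) f g, T (a *: f + g) = a *: T f + T g.

Definition is_character (mul : B -> B -> B) (one : B) (x : B -> R[i]) : Prop :=
  [/\ (forall (a : R[i]) f g, x (a *: f + g) = a * x f + x g),
      (forall f g, x (mul f g) = x f * x g)
    & x one = 1].

(* Maximal ideal space, as a subset of B -> C with the topology of pointwise
   convergence, i.e. the weak-* (Gelfand) topology. The Gelfand transform of f
   is  \hat f (x) = x f. *)
Definition max_ideal_space (mul : B -> B -> B) (one : B) : set {ptws B -> R[i]} :=
  [set x | is_character mul one x].

(* semi-simple: the Jacobson radical (= kernel of the Gelfand transform) is 0 *)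
Definition semisimple (mul : B -> B -> B) (one : B) : Prop :=
  forall f, (forall x, max_ideal_space mul one x -> x f = 0) -> f = 0.

Definition unital_endomorphism (mul : B -> B -> B) (one : B) (T : B -> B) : Prop :=
  [/\ is_linear_map T, (forall f g, T (mul f g) = mul (T f) (T g)) & T one = one].

Definition bounded_operator (T : B -> B) : Prop :=
  is_linear_map T /\ exists M : R, forall f, normB (T f) <= M * normB f.

Definition unit_ball : set B := [set f | normB f <= 1].

Definition compact_operator (K : B -> B) : Prop :=
  is_linear_map K /\ compact (closure (K @` unit_ball)).

Definition opnorm (A : B -> B) : R := sup [set normB (A f) | f in unit_ball].

Definition ess_norm (A : B -> B) : R :=
  inf [set opnorm (fun f => A f - K f) | K in compact_operator].

Definition riesz_operator (T : B -> B) : Prop :=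
  bounded_operator T /\
  (fun n : nat => ess_norm (iter n T) `^ (n%:R^-1)) @ \oo --> (0 : R).

Definition induced_by (mul : B -> B -> B) (one : B) (T : B -> B)
    (phi : {ptws B -> R[i]} -> {ptws B -> R[i]}) : Prop :=
  let X := max_ideal_space mul one in
  [/\ phi @` X `<=` X, {within X, continuous phi}
    & forall f x, X x -> x (T f) = phi x f].

(* the norm (B^* ) metric on X *)
Definition char_dist (x y : B -> R[i]) : R :=
  sup [set normC (x f - y f) | f in unit_ball].

Definition norm_isolated (X : set {ptws B -> R[i]}) (x0 : {ptws B -> R[i]}) : Prop :=
  exists2 e : R, 0 < e & forall y, X y -> char_dist x0 y < e -> y = x0.

End BanachAlgebra.

From HB Require Import structures.
From mathcomp Require Import all_boot all_order all_algebra.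
From mathcomp Require Import all_classical all_reals all_analysis.
From mathcomp Require Import complex.
From mathcomp Require Import ring lra.
Import Order.TTheory GRing.Theory Num.Theory.
Import numFieldTopology.Exports numFieldNormedType.Exports.
Local Open Scope ring_scope.
Local Open Scope classical_set_scope.

Set Implicit Arguments.
Unset Strict Implicit.
Unset Printing Implicit Defensive.

(* By the Riesz property, some power T^n is within e/4 of a compact operator
   K, where e is the radius of norm-isolation of x0.  Characters have norm at
   most 1 and are equicontinuous, so on the compact set K(ball) weak-*
   convergence is uniform; hence z |-> z o T^n = phi_n(z) is weak-* to norm
   continuous up to an error e/2.  The fiber {y in X | phi_n(y) = x0} is
   therefore open (x0 is norm-isolated), closed (evaluations are weak-*
   continuous) and contains the fixed point x0, so by connectedness it is all
   of X.  Thus every character agrees with x0 at T^n f, and semisimplicity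
   gives T^n f = x0(f) 1. *)

Lemma connected_locally_clopen (T : topologicalType) (S A : set T) :
  connected S -> A `<=` S -> A !=set0 ->
  (forall y, A y -> \forall z \near y, S z -> A z) ->
  (forall y, S y -> ~ A y -> \forall z \near y, S z -> ~ A z) -> A = S.
Proof.
move=> Sconn AS A0 Aopen Aclosed; apply: Sconn => //.
- exists (interior (fun z => S z -> A z)); first exact: open_interior.
  apply/seteqP; split => [y Ay|y [Sy /nbhs_singleton]]; last exact.
  by split; [exact: AS | exact: Aopen].
- exists (~` interior (fun z => S z -> ~ A z)).
    by rewrite closedC; exact: open_interior.
  apply/seteqP; split => [y Ay|y [Sy nAy]].
    by split; [exact: AS | move=> /nbhs_singleton/(_ (AS _ Ay))].
  by apply: contrapT => nA; apply: nAy; exact: Aclosed.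
Qed.

Lemma bigcap_iter_image_fixed (U : Type) (S : set U) (phi : U -> U) (x0 : U) :
  phi @` S `<=` S -> \bigcap_n (iter n phi @` S) = [set x0] ->
  S x0 /\ phi x0 = x0.
Proof.
move=> phiS Scap.
have x0_iter n : (iter n phi @` S) x0.
  by have : [set x0] x0 by []; rewrite -Scap; exact.
split; first by have [y Sy <-] := x0_iter 0%N.
suff : (\bigcap_n (iter n phi @` S)) (phi x0) by rewrite Scap.
move=> n _; have [y Sy <-] := x0_iter n.
by exists (phi y); [apply: phiS; exists y | rewrite -iterSr iterS].
Qed.

Section ComplexNorms.
Variables (R : realType) (B : completeNormedModType R[i]).

Lemma ge0_complexRe (w : R[i]) : 0 <= w -> w = (complex.Re w)%:C%C.
Proof. by case: w => a b; rewrite lecE /= => /andP[/eqP -> _]. Qed.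

Lemma ltC_Re (r : R) (w : R[i]) : 0 < w -> ((r%:C)%C < w) = (r < complex.Re w).
Proof. by move/ltW/ge0_complexRe => {1}->; rewrite ltcR. Qed.

Lemma normBE (f : B) : `|f| = (normB f)%:C%C.
Proof. exact/ge0_complexRe/normr_ge0. Qed.

Lemma normCE (z : R[i]) : `|z| = (normC z)%:C%C.
Proof. exact/ge0_complexRe/normr_ge0. Qed.

Lemma normB_ge0 (f : B) : 0 <= normB f.
Proof. by rewrite -(lecR 0) -normBE normr_ge0. Qed.

Lemma normC_gt0 (a : R[i]) : (0 < normC a) = (a != 0).
Proof. by rewrite -(ltcR 0) -normCE normr_gt0. Qed.

Lemma normB_add (f g : B) : normB (f + g) <= normB f + normB g.
Proof. by have := ler_normD f g; rewrite !normBE -rmorphD lecR. Qed.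

Lemma normC_add (a b : R[i]) : normC (a + b) <= normC a + normC b.
Proof. by have := ler_normD a b; rewrite !normCE -rmorphD lecR. Qed.

Lemma normB_N (f : B) : normB (- f) = normB f.
Proof. by rewrite /normB normrN. Qed.

Lemma normC_N (a : R[i]) : normC (- a) = normC a.
Proof. by rewrite /normC normrN. Qed.

Lemma normB_Z (a : R[i]) (f : B) : normB (a *: f) = normC a * normB f.
Proof. by rewrite {1}/normB normrZ normCE normBE -rmorphM. Qed.

Lemma unit_ball0 : unit_ball (0 : B).
Proof. by rewrite /unit_ball /= /normB normr0 /= ler01. Qed.

Lemma normB_near (g : B) (r : R) : 0 < r -> \forall g' \near g, normB (g' - g) < r.
Proof.
move=> r_gt0; have : (id : B -> B) @ nbhs g --> g by [].
move/cvgrPdist_lt/(_ (r%:C)%C); rewrite ltcR => /(_ r_gt0).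
by apply: filterS => g'; rewrite -normrN opprB normBE ltcR.
Qed.

Lemma normB_series_cvg (u : B ^nat) :
  cvgn (series (fun k => normB (u k))) -> cvgn (series u).
Proof.
move=> /cauchy_cvgP/cauchy_seriesP normu_cauchy.
apply/cauchy_cvgP/cauchy_seriesP => eps eps_gt0.
have /normu_cauchy : 0 < complex.Re eps by move: eps_gt0; rewrite ltcE => /andP[].
apply: filterS => n; rewrite ger0_norm => [sum_lt|]; last first.
  by apply: sumr_ge0 => k _; exact: normB_ge0.
apply: le_lt_trans (ler_norm_sum _ _ _) _.
by under eq_bigr do rewrite normBE; rewrite -rmorph_sum ltC_Re.
Qed.

Lemma compact_normB_bounded (C : set B) :
  compact C -> exists M : R, forall g, C g -> normB g <= M.
Proof.
move=> cC.
have cov g : C g -> \forall g' \near g & M \near (pinfty_nbhs R), normB g' < M.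
  move=> Cg; exists ([set g' | normB (g' - g) < 1], [set M | normB g + 1 < M]).
    by split; [exact: normB_near | apply: nbhs_pinfty_gt; rewrite num_real].
  case=> g' M [/= g'g gM]; apply: le_lt_trans gM.
  rewrite -[g'](subrK g) addrC; apply: le_trans (normB_add _ _) _.
  by rewrite lerD // ltW.
have [M bndM] := filter_ex ((compact_near_coveringP C).1 cC R _ _ _ cov).
by exists M => g Cg; apply/ltW/bndM.
Qed.

End ComplexNorms.

Section BanachAlgebra.
Variables (R : realType) (B : completeNormedModType R[i]).
Variables (mul : B -> B -> B) (one : B).
Hypothesis HB : is_unital_comm_banach_algebra mul one.

Lemma bmulC : commutative mul.
Proof. by case: HB => [[]]. Qed.

Lemma bmulDl f g h : mul (f + g) h = mul f h + mul g h.
Proof. by case: HB => _ []. Qed.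

Lemma bmulDr f g h : mul f (g + h) = mul f g + mul f h.
Proof. by rewrite bmulC bmulDl !(bmulC f). Qed.

Lemma bmulZl a f g : mul (a *: f) g = a *: mul f g.
Proof. by case: HB => _ []. Qed.

Lemma bmulr0 f : mul f 0 = 0.
Proof. by apply: (@addrI _ (mul f 0)); rewrite -bmulDr !addr0. Qed.

Lemma bmulrB f g h : mul f (g - h) = mul f g - mul f h.
Proof.
by rewrite bmulDr; congr (_ + _); rewrite bmulC -scaleN1r bmulZl scaleN1r bmulC.
Qed.

Lemma normB_bmul f g : normB (mul f g) <= normB f * normB g.
Proof. by case: HB => _ []. Qed.

Lemma bmul_cvg f (u : B ^nat) l : u @ \oo --> l ->
  (fun n => mul f (u n)) @ \oo --> mul f l.
Proof.
move=> /cvgrPdist_lt u_cvg; apply/cvgrPdist_lt => eps eps_gt0.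
have e_gt0 : 0 < complex.Re eps by move: eps_gt0; rewrite ltcE => /andP[].
have d_gt0 : 0 < complex.Re eps / (normB f + 1).
  by rewrite divr_gt0 // ltr_wpDl ?normB_ge0.
have := u_cvg ((complex.Re eps / (normB f + 1))%:C)%C.
rewrite ltcR => /(_ d_gt0); apply: filterS => n.
rewrite normBE ltcR -bmulrB normBE ltC_Re // => lu_lt.
apply: le_lt_trans (normB_bmul _ _) _.
apply: le_lt_trans (ler_wpM2l (normB_ge0 f) (ltW lu_lt)) _.
rewrite mulrA ltr_pdivrMr ?ltr_wpDl ?normB_ge0 // mulrC ltr_pM2l //.
by rewrite ltrDl.
Qed.

(* The solution is the Neumann series f + f^2 + f^3 + ... *)
Lemma quasi_inverse_small f : normB f < 1 -> exists g, g = f + mul f g.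
Proof.
move=> f_lt1; set r := normB f.
pose u k := iter k (mul f) f.
have u_le k : normB (u k) <= r ^+ k.+1.
  elim: k => [|k ih]; first by rewrite expr1.
  rewrite /u iterS -/(u k) exprS.
  exact: le_trans (normB_bmul _ _) (ler_wpM2l (normB_ge0 _) ih).
have u_cvg : cvgn (series u).
  apply: normB_series_cvg; apply: (@series_le_cvg _ _ (geometric r r)) => [k|k|k|].
  - exact: normB_ge0.
  - by rewrite /geometric /= -exprS exprn_ge0 ?normB_ge0.
  - by rewrite /geometric /= -exprS.
  - by apply: is_cvg_geometric_series; rewrite ger0_norm ?normB_ge0.
have seriesS n : series u n.+1 = f + mul f (series u n).
  elim: n => [|n ih].
    by rewrite seriesSr /series /= big_mkord big_ord0 add0r bmulr0 addr0.
  by rewrite seriesSr [in LHS]ih -addrA -bmulDr -seriesSr.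
set g := limn (series u); exists g.
have g_lim : (fun n => series u n.+1) @ \oo --> g by rewrite cvg_shiftS.
have fg_lim : (fun n => series u n.+1) @ \oo --> f + mul f g.
  under eq_fun do rewrite seriesS.
  by apply: cvgD; [exact: cvg_cst | exact: bmul_cvg].
exact: cvg_unique g_lim fg_lim.
Qed.

Section Character.
Variable x : B -> R[i].
Hypothesis x_char : is_character mul one x.

Lemma chD f g : x (f + g) = x f + x g.
Proof. by case: x_char => xlin _ _; rewrite -[f]scale1r xlin mul1r scale1r. Qed.

Lemma ch0 : x 0 = 0.
Proof. by apply: (@addrI _ (x 0)); rewrite -chD !addr0. Qed.

Lemma chZ a f : x (a *: f) = a * x f.
Proof. by case: x_char => xlin _ _; rewrite -[a *: f]addr0 xlin ch0 addr0. Qed.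

Lemma chB f g : x (f - g) = x f - x g.
Proof. by rewrite -scaleN1r chD chZ mulN1r. Qed.

Lemma chM f g : x (mul f g) = x f * x g.
Proof. by case: x_char. Qed.

Lemma ch1 : x one = 1.
Proof. by case: x_char. Qed.

(* If |x f| > ||f|| then h := f / x f has x h = 1 and ||h|| < 1,
   but x kills the equation g = h + h g of the quasi-inverse of h. *)
Lemma ch_norm_le f : normC (x f) <= normB f.
Proof.
rewrite leNgt; apply/negP => f_lt.
have xf_gt0 : 0 < normC (x f) := le_lt_trans (normB_ge0 f) f_lt.
have xf_neq0 : x f != 0 by rewrite -normC_gt0.
set h := (x f)^-1 *: f.
have h_lt1 : normB h < 1.
  rewrite normB_Z; have -> : normC (x f)^-1 = (normC (x f))^-1.
    by rewrite {1}/normC normrV ?unitfE // normCE -fmorphV.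
  by rewrite mulrC ltr_pdivrMr // mul1r.
have xh : x h = 1 by rewrite chZ mulVf.
have [g g_eq] := quasi_inverse_small h_lt1.
have : x g = 1 + x g by rewrite {1}g_eq chD chM xh mul1r.
by rewrite -{1}[x g]add0r => /addIr/eqP; rewrite eq_sym oner_eq0.
Qed.

End Character.

Lemma semisimple_ch_eq f g : semisimple mul one ->
  (forall x, max_ideal_space mul one x -> x f = x g) -> f = g.
Proof.
move=> Bss fg; apply/eqP; rewrite -subr_eq0; apply/eqP.
by apply: Bss => x Xx; rewrite chB // (fg x Xx) subrr.
Qed.

End BanachAlgebra.

Section WeakStarTopology.
Variables (R : realType) (B : completeNormedModType R[i]).
Variables (mul : B -> B -> B) (one : B).
Hypothesis HB : is_unital_comm_banach_algebra mul one.

Lemma eval_near (x : {ptws B -> R[i]}) (g : B) (r : R) : 0 < r ->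
  \forall y \near x, normC (y g - x g) < r.
Proof.
move=> r_gt0; have : {ptws, nbhs x --> x} by [].
move/(pointwise_cvgP _ _).1 => /(_ g).
move/(@cvgrPdist_lt _ (R[i]^o) _ _ _ (fun y : {ptws B -> R[i]} => y g)).
move/(_ (r%:C)%C); rewrite ltcR => /(_ r_gt0).
by apply: filterS => y; rewrite -normrN opprB normCE ltcR.
Qed.

(* Characters are 1-Lipschitz, so pointwise closeness at finitely many
   points of a compact set propagates to the whole set. *)
Lemma ch_near_unif (C : set B) (x : {ptws B -> R[i]}) (d : R) :
  compact C -> is_character mul one x -> 0 < d ->
  \forall y \near x, is_character mul one y ->
    forall g, C g -> normC (y g - x g) < d.
Proof.
move=> cC x_char d_gt0; have d3_gt0 : 0 < d / 3 by rewrite divr_gt0.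
have cov : forall g, C g -> \forall g' \near g & y \near nbhs x,
    (fun y g => is_character mul one y -> normC (y g - x g) < d) y g'.
  move=> g Cg; exists ([set g' | normB (g' - g) < d / 3],
                     [set y | normC (y g - x g) < d / 3]).
    by split; [exact: normB_near | exact: eval_near].
  case=> g' y [/= g'g yx] y_char.
  have -> : y g' - x g' = y (g' - g) + (y g - x g) + x (g - g').
    by rewrite (chB y_char) (chB x_char); ring.
  apply: le_lt_trans (normC_add _ _) _.
  apply: (@lt_le_trans _ _ (d / 3 + d / 3 + d / 3)); last lra.
  rewrite ltrD //; last first.
    by rewrite (le_lt_trans (ch_norm_le HB x_char _)) // -normB_N opprB.
  apply: le_lt_trans (normC_add _ _) _; rewrite ltrD //.
  exact: le_lt_trans (ch_norm_le HB y_char _) g'g.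
have := (compact_near_coveringP C).1 cC {ptws B -> R[i]} (nbhs x) _ _ cov.
move=> /(_ (nbhs_filter _)); apply: filterS => y near_y y_char g Cg.
exact: near_y.
Qed.

Lemma near_char_dist_comp_le (A K : B -> B) (y : {ptws B -> R[i]}) (d eps : R) :
  compact_operator K -> (forall f, unit_ball f -> normB (A f - K f) <= d) ->
  is_character mul one y -> 0 < eps ->
  \forall z \near y, is_character mul one z ->
    char_dist (y \o A) (z \o A) <= eps + (d + d).
Proof.
move=> [_ cK] AK y_char eps_gt0.
apply: (@filterS _ _ (nbhs_filter y) _ _ _ (ch_near_unif cK y_char eps_gt0)).
move=> z near_z z_char.
apply: ge_sup; first by exists (normC (y (A 0) - z (A 0))), 0; first exact: unit_ball0.
move=> _ [g g_ball <-] /=.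
have -> : y (A g) - z (A g) = (y (K g) - z (K g)) + (y (A g - K g) - z (A g - K g)).
  by rewrite (chB y_char) (chB z_char); ring.
apply: le_trans (normC_add _ _) _; apply: lerD.
  rewrite -normC_N opprB; apply/ltW/near_z => //.
  by apply: subset_closure; exists g.
apply: le_trans (normC_add _ _) _; rewrite normC_N.
by apply: lerD; apply: le_trans (ch_norm_le HB _ _) (AK _ g_ball).
Qed.

End WeakStarTopology.

Section Operators.
Variables (R : realType) (B : completeNormedModType R[i]).
Implicit Types (A K T : B -> B).

Lemma opnorm_ge0 A : 0 <= opnorm A.
Proof.
have [A_sup|] := pselect (has_sup [set normB (A f) | f in @unit_ball R B]).
  apply: le_trans (normB_ge0 (A 0)) _; apply: sup_upper_bound => //.
  by exists 0; first exact: unit_ball0.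
by rewrite /opnorm => /sup_out ->.
Qed.

Lemma normB_le_opnorm A (M : R) f :
  (forall g, unit_ball g -> normB (A g) <= M) -> unit_ball f ->
  normB (A f) <= opnorm A.
Proof.
move=> A_bnd f_ball; apply: sup_upper_bound; last by exists f.
split; first by exists (normB (A f)), f.
by exists M => _ [g g_ball <-]; exact: A_bnd.
Qed.

Lemma compact_operator0 : compact_operator (fun _ : B => 0).
Proof.
split; first by move=> a f g; rewrite scaler0 addr0.
have -> : (fun _ : B => (0 : B)) @` @unit_ball R B = [set (0 : B)].
  apply/seteqP; split => [_ [f _ <-] //|_ ->].
  by exists 0; first exact: unit_ball0.
have closed0 : closed [set (0 : B)].
  exact: compact_closed (@norm_hausdorff _ B) (@compact_set1 B 0).
by rewrite -(closure_id _).1 //; exact: compact_set1.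
Qed.

Lemma ess_norm_lt_compact A (c : R) : ess_norm A < c ->
  exists2 K, compact_operator K & opnorm (fun f => A f - K f) < c.
Proof.
move=> Ac; set S := [set opnorm (fun f => A f - K f) | K in @compact_operator R B].
have S_inf : has_inf S.
  split; first by exists (opnorm (fun f => A f - 0)), (fun _ => 0);
    first exact: compact_operator0.
  by exists 0 => _ [K _ <-]; exact: opnorm_ge0.
have gap : 0 < c - ess_norm A by rewrite subr_gt0.
have [_ [K cK <-]] := inf_adherent gap S_inf.
by rewrite addrC subrK; exists K.
Qed.

Lemma compact_operator_ball_bounded K : compact_operator K ->
  exists M : R, forall f, unit_ball f -> normB (K f) <= M.
Proof.
move=> [_ /compact_normB_bounded [M KM]]; exists M => f f_ball.
by apply: KM; apply: subset_closure; exists f.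
Qed.

Lemma ess_norm_lt_decomposition A (c : R) :
  (exists M : R, forall f, unit_ball f -> normB (A f) <= M) -> ess_norm A < c ->
  exists2 K, compact_operator K & forall f, unit_ball f -> normB (A f - K f) <= c.
Proof.
move=> [M AM] /ess_norm_lt_compact [K cK AK_lt].
have [N KN] := compact_operator_ball_bounded cK.
exists K => // f f_ball; apply: le_trans (ltW AK_lt).
apply: (@normB_le_opnorm (fun g => A g - K g) (M + N)) => // g g_ball.
by apply: le_trans (normB_add _ _) _; rewrite normB_N lerD ?AM ?KN.
Qed.

Lemma iter_ball_bounded T n : bounded_operator T ->
  exists M : R, forall f, unit_ball f -> normB (iter n T f) <= M.
Proof.
move=> [_ [M TM]]; exists (`|M| ^+ n) => f f_ball.
suff iterTM k g : normB (iter k T g) <= `|M| ^+ k * normB g.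
  by apply: le_trans (iterTM n f) _; rewrite ler_piMr ?exprn_ge0.
elim: k g => [|k ih] g; first by rewrite expr0 mul1r.
rewrite iterS exprS -mulrA; apply: le_trans (TM _) _.
apply: le_trans (ler_wpM2r (normB_ge0 _) (ler_norm M)) _.
exact: ler_wpM2l (ih g).
Qed.

Lemma riesz_ess_norm_small T (c : R) : riesz_operator T -> 0 < c ->
  exists2 n, (0 < n)%N & ess_norm (iter n T) < c.
Proof.
move=> [_ T_cvg] c_gt0; set c' := Num.min c 1.
have c'_gt0 : 0 < c' by rewrite lt_min c_gt0 ltr01.
have c'_le1 : c' <= 1 by rewrite ge_min lexx orbT.
have /filter_ex [n [n_gt0 ess_lt]] : \forall n \near \oo,
    (0 < n)%N /\ ess_norm (iter n T) `^ n%:R^-1 < c'.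
  apply: filterI; first exact: nbhs_infty_gt.
  move/cvgrPdist_lt: T_cvg => /(_ c' c'_gt0); apply: filterS => n.
  by rewrite sub0r normrN; apply: le_lt_trans; exact: ler_norm.
exists n => //; apply: (@lt_le_trans _ _ c'); last by rewrite ge_min lexx.
rewrite ltNge; apply/negP => c'_le.
suff : c' <= ess_norm (iter n T) `^ n%:R^-1 by rewrite leNgt ess_lt.
apply: le_trans (@ger1_powR _ c' n%:R^-1 _ _) _.
- by rewrite c'_gt0 c'_le1.
- by rewrite invf_le1 ?ler1n // ltr0n.
apply: ge0_ler_powR => //; rewrite ?nnegrE ?invr_ge0 ?(ltW c'_gt0) //.
exact: le_trans (ltW c'_gt0) c'_le.
Qed.

End Operators.

Section InducedEndomorphism.
Variables (R : realType) (B : completeNormedModType R[i]).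
Variables (mul : B -> B -> B) (one : B) (T : B -> B).
Variable phi : {ptws B -> R[i]} -> {ptws B -> R[i]}.
Hypotheses (HB : is_unital_comm_banach_algebra mul one)
  (T_phi : induced_by mul one T phi).
Let X := max_ideal_space mul one.

Lemma iter_induced_in n y : X y -> X (iter n phi y).
Proof.
case: T_phi => phiX _ _; elim: n y => [//|n ih] y Xy /=.
by apply: phiX; exists (iter n phi y); first exact: ih.
Qed.

Lemma iter_inducedE n y f : X y -> iter n phi y f = y (iter n T f).
Proof.
case: T_phi => _ _ Tphi; elim: n y f => [//|n ih] y f Xy.
rewrite iterS -Tphi; last exact: iter_induced_in.
by rewrite ih // iterSr.
Qed.

Variables (x0 : {ptws B -> R[i]}) (e : R) (n : nat) (K : B -> B).
Hypotheses (e_gt0 : 0 < e)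
  (x0_iso : forall y, X y -> char_dist x0 y < e -> y = x0)
  (K_compact : compact_operator K)
  (TnK : forall f, unit_ball f -> normB (iter n T f - K f) <= e / 4).

Lemma iter_fiber_open y : X y -> iter n phi y = x0 ->
  \forall z \near y, X z -> iter n phi z = x0.
Proof.
move=> Xy y_x0; have e4_gt0 : 0 < e / 4 by rewrite divr_gt0.
have iter_comp w : X w -> iter n phi w = w \o iter n T :> (B -> R[i]).
  by move=> Xw; apply/funext => f; exact: iter_inducedE.
apply: (@filterS _ _ (nbhs_filter y) _ _ _
  (near_char_dist_comp_le HB K_compact TnK Xy e4_gt0)) => z z_near Xz.
apply: x0_iso; first exact: iter_induced_in.
rewrite -{1}y_x0 !iter_comp //; apply: le_lt_trans (z_near Xz) _; lra.
Qed.

Lemma iter_fiber_closed y : X y -> iter n phi y <> x0 ->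
  \forall z \near y, X z -> iter n phi z <> x0.
Proof.
move=> Xy y_x0; have /existsNP [f yf_neq] : ~ forall f, iter n phi y f = x0 f.
  by move=> yf_eq; apply: y_x0; exact/funext.
have r_gt0 : 0 < normC (iter n phi y f - x0 f).
  by rewrite normC_gt0 subr_eq0; exact/eqP.
apply: (@filterS _ _ (nbhs_filter y) _ _ _ (eval_near y (iter n T f) r_gt0)).
move=> z z_near Xz z_x0; move: z_near.
by rewrite -!iter_inducedE // z_x0 -normC_N opprB ltxx.
Qed.

Hypotheses (X_conn : connected X) (x0_in : X x0) (phi_x0 : phi x0 = x0).

Lemma iter_fiber_full y : X y -> iter n phi y = x0.
Proof.
suff -> : X = [set y | X y /\ iter n phi y = x0] by case.
apply/esym/connected_locally_clopen => //; first by move=> y' [].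
- by exists x0; split=> //; exact: iter_fix.
- move=> y' [Xy' y'_x0].
  apply: (@filterS _ _ (nbhs_filter y') _ _ _ (iter_fiber_open Xy' y'_x0)).
  by move=> z z_x0 Xz; split => //; exact: z_x0.
- move=> y' Xy' y'_notin.
  have y'_x0 : iter n phi y' <> x0 by move=> y'_x0; apply: y'_notin.
  apply: (@filterS _ _ (nbhs_filter y') _ _ _ (iter_fiber_closed Xy' y'_x0)).
  by move=> z z_x0 Xz [_]; exact: z_x0.
Qed.

End InducedEndomorphism.

Theorem corollary1p3 (R : realType) (B : completeNormedModType R[i])
    (mul : B -> B -> B) (one : B)
    (T : B -> B) (phi : {ptws B -> R[i]} -> {ptws B -> R[i]})
    (x0 : {ptws B -> R[i]}) :
  is_unital_comm_banach_algebra mul one ->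
  semisimple mul one ->
  connected (max_ideal_space mul one) ->
  unital_endomorphism mul one T ->
  riesz_operator T ->
  induced_by mul one T phi ->
  \bigcap_n (iter n phi @` max_ideal_space mul one) = [set x0] ->
  norm_isolated (max_ideal_space mul one) x0 ->
  exists2 N : nat, (0 < N)%N & forall f : B, iter N T f = x0 f *: one.
Proof.
move=> HB B_ss X_conn _ T_riesz T_phi X_cap [e e_gt0 x0_iso].
have [phiX _ _] := T_phi.
have [x0_in phi_x0] := bigcap_iter_image_fixed phiX X_cap.
have e4_gt0 : 0 < e / 4 by rewrite divr_gt0.
have [n n_gt0 Tn_ess] := riesz_ess_norm_small T_riesz e4_gt0.
have [K K_compact TnK] :=
  ess_norm_lt_decomposition (iter_ball_bounded n T_riesz.1) Tn_ess.
exists n => // f; apply: (semisimple_ch_eq B_ss) => x Xx.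
rewrite (chZ Xx) (ch1 Xx) mulr1 -(iter_inducedE T_phi _ _ Xx).
by rewrite (iter_fiber_full HB T_phi e_gt0 x0_iso K_compact TnK X_conn x0_in
  phi_x0 Xx).
Qed.
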